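(* Let $(E,d)$ be a Polish space and $\mu\in(0,1)$. For any $f\in D^{\mu}([0,1],E)$, \[ \tfrac12[f]_{\sim\mu}\le[f]_{\mu}\le 2[f]_{\sim\mu}. \]
   Context: $D([0,1],E)$ is the space of càdlàg $E$-valued functions on $[0,1]$. For $0\le s\le t\le u\le 1$, $\Delta(f;s,t,u)=d(f(s),f(t))\wedge d(f(t),f(u))$, and $[f]_\mu=\sup_{0\le s\le t\le u\le 1}\frac{\Delta(f;s,t,u)}{|u-s|^\mu}$. $D^{\mu}([0,1],E)$ is the set of $f\in D([0,1],E)$ with $[f]_\mu+\sup_{t\in(0,1]}\frac{d(f(0),f(t))}{t^\mu}+\sup_{t\in[0,1)}\frac{d(f(1),f(t))}{|1-t|^\mu}<\infty$. For $0\le\sigma<\tau\le1$, $N(f;(\sigma,\tau))=\inf_{\sigma<\theta\le\tau}\sup_{s\in[\sigma,\theta),\,u\in[\theta,\tau]}\left[d(f(\sigma),f(s))\vee d(f(u),f(\tau))\right]$; for $\eta>0$, $N(f;\eta)=\sup_{0\le\sigma<\tau\le 1,\ \tau-\sigma\le\eta}N(f;(\sigma,\tau))$; and $[f]_{\sim\mu}=\sup_{\eta>0}\frac{N(f;\eta)}{\eta^\mu}$. *)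

From HB Require Import structures.
From mathcomp Require Import all_boot all_order all_algebra.
From mathcomp Require Import all_classical all_reals all_analysis.
Set Implicit Arguments. Unset Strict Implicit. Unset Printing Implicit Defensive.
Import Order.TTheory GRing.Theory Num.Theory.
Local Open Scope classical_set_scope.
Local Open Scope ring_scope.

Section Defs.
Variables (R : realType) (E : Type) (d : E -> E -> R).

Definition is_metric : Prop :=
  [/\ forall x y, 0 <= d x y,
      forall x y, d x y = 0 <-> x = y,
      forall x y, d x y = d y x &
      forall x y z, d x z <= d x y + d y z].

Definition cauchy_seq (u : nat -> E) : Prop :=
  forall eps : R, 0 < eps -> exists N : nat, forall m n : nat,
    (N <= m)%N -> (N <= n)%N -> d (u m) (u n) < eps.

Definition converges_to (u : nat -> E) (l : E) : Prop :=
  forall eps : R, 0 < eps -> exists N : nat, forall n : nat,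
    (N <= n)%N -> d (u n) l < eps.

Definition is_polish : Prop :=
  [/\ is_metric,
      (forall u, cauchy_seq u -> exists l, converges_to u l) &
      exists q : nat -> E, forall x (eps : R), 0 < eps ->
        exists n, d x (q n) < eps].

(* f : R -> E, only values on [0,1] matter. Cadlag on [0,1]:
   right-continuous on [0,1), left limits on (0,1]. *)
Definition cadlag (f : R -> E) : Prop :=
  (forall t, 0 <= t < 1 -> forall eps : R, 0 < eps ->
     exists2 delta : R, 0 < delta & forall s, t <= s <= 1 -> s < t + delta ->
       d (f s) (f t) < eps) /\
  (forall t, 0 < t <= 1 -> exists l : E, forall eps : R, 0 < eps ->
     exists2 delta : R, 0 < delta & forall s, 0 <= s < t -> t - delta < s ->
       d (f s) l < eps).

Definition Delta (f : R -> E) (s t u : R) : R :=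
  Num.min (d (f s) (f t)) (d (f t) (f u)).

Definition holder_semi (mu : R) (f : R -> E) : \bar R :=
  ereal_sup [set x | exists s t u : R,
     [/\ 0 <= s, s <= t, t <= u, u <= 1 &
         x = ((Delta f s t u) / (`|u - s| `^ mu))%:E]].

Definition holder_left (mu : R) (f : R -> E) : \bar R :=
  ereal_sup [set x | exists t : R, [/\ 0 < t, t <= 1 &
     x = (d (f 0) (f t) / (t `^ mu))%:E]].

Definition holder_right (mu : R) (f : R -> E) : \bar R :=
  ereal_sup [set x | exists t : R, [/\ 0 <= t, t < 1 &
     x = (d (f 1) (f t) / (`|1 - t| `^ mu))%:E]].

Definition in_Dmu (mu : R) (f : R -> E) : Prop :=
  cadlag f /\
  (holder_semi mu f + holder_left mu f + holder_right mu f < +oo)%E.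

Definition Nint (f : R -> E) (sigma tau : R) : \bar R :=
  ereal_inf [set y | exists theta : R, [/\ sigma < theta, theta <= tau &
     y = ereal_sup [set x | exists s u : R,
        [/\ sigma <= s, s < theta, theta <= u, u <= tau &
            x = (Num.max (d (f sigma) (f s)) (d (f u) (f tau)))%:E]]]].

Definition Neta (f : R -> E) (eta : R) : \bar R :=
  ereal_sup [set y | exists sigma tau : R,
     [/\ 0 <= sigma, sigma < tau, tau <= 1, tau - sigma <= eta &
         y = Nint f sigma tau]].

Definition holder_tilde (mu : R) (f : R -> E) : \bar R :=
  ereal_sup [set y | exists eta : R, 0 < eta /\
     y = (Neta f eta * ((eta `^ mu)^-1)%:E)%E].

End Defs.

From HB Require Import structures.
From mathcomp Require Import all_boot all_order all_algebra.
From mathcomp Require Import all_classical all_reals all_analysis.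
From mathcomp Require Import lra.
Import Order.TTheory GRing.Theory Num.Theory.
Local Open Scope ring_scope.

(* If s <= t <= u, then for every theta in (s, u] the point t lies in
   [s, theta) or in [theta, u], so Delta(f; s, t, u) <= N(f; (s, u)); hence
   [f]_mu <= [f]_~mu.
   Conversely, let Delta(f; s, t, u) <= C on [sigma, tau], let K > C, and let
   theta be the infimum of tau and of the points t where d(f sigma, f t) > K.
   Right continuity at sigma gives theta > sigma, and d(f sigma, f s) <= K for
   s < theta.  At such a far point t, Delta(f; sigma, t, u) <= C forces
   d(f t, f u) <= C for u >= t; every u >= theta is within K of a far point
   (by right continuity at theta when u = theta), so d(f u, f tau) <= K + C.
   Hence N(f; (sigma, tau)) <= 2C, and C = [f]_mu eta^mu gives
   N(f; eta) <= 2 [f]_mu eta^mu. *)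

Section Oscillation.
Set Implicit Arguments.
Unset Strict Implicit.
Variables (R : realType) (E : Type) (d : E -> E -> R) (f : R -> E).

Lemma Delta_le_Nint s t u : s <= t -> t <= u ->
  ((Delta d f s t u)%:E <= Nint d f s u)%E.
Proof.
move=> st tu; apply: le_ereal_inf_tmp => _ [th [sth thu ->]].
apply: le_ereal_sup_tmp; case: (ltP t th) => tth.
  exists (Num.max (d (f s) (f t)) (d (f u) (f u)))%:E; first by exists t, u.
  by rewrite lee_fin /Delta ge_min !le_max lexx.
exists (Num.max (d (f s) (f s)) (d (f t) (f u)))%:E; first by exists s, t.
by rewrite lee_fin /Delta ge_min !le_max lexx !orbT.
Qed.

Hypothesis d_ge0 : forall x y, 0 <= d x y.

Lemma Nint_ge0 sigma tau : (0 <= Nint d f sigma tau)%E.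
Proof.
apply: le_ereal_inf_tmp => _ [th [sth thu ->]].
apply: le_ereal_sup_tmp.
exists (Num.max (d (f sigma) (f sigma)) (d (f tau) (f tau)))%:E.
  by exists sigma, tau.
by rewrite lee_fin le_max d_ge0.
Qed.

Hypothesis d_xx : forall x, d x x = 0.
Hypothesis d_sym : forall x y, d x y = d y x.
Hypothesis d_triangle : forall x y z, d x z <= d x y + d y z.
Hypothesis f_right_cont : forall t, 0 <= t < 1 -> forall eps : R, 0 < eps ->
  exists2 delta : R, 0 < delta & forall s, t <= s <= 1 -> s < t + delta ->
    d (f s) (f t) < eps.

Section NintBound.
Variables (sigma tau C K : R).
Hypotheses (sigma_ge0 : 0 <= sigma) (sigma_lt_tau : sigma < tau)
  (tau_le1 : tau <= 1) (C_ge0 : 0 <= C) (C_lt_K : C < K).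
Hypothesis Delta_le_C : forall s t u,
  sigma <= s -> s <= t -> t <= u -> u <= tau -> Delta d f s t u <= C.

Definition far_set : set R :=
  fun t => (sigma <= t <= tau /\ K < d (f sigma) (f t)) \/ t = tau.

Let theta := inf far_set.

Lemma far_set_bounds t : far_set t -> sigma <= t <= tau.
Proof. by move=> [[]//|->]; rewrite lexx ltW. Qed.

Lemma has_inf_far_set : has_inf far_set.
Proof.
split; first by exists tau; right.
by exists sigma => t /far_set_bounds /andP[].
Qed.

Lemma theta_le_far t : far_set t -> theta <= t.
Proof. exact: (ge_inf has_inf_far_set.2). Qed.

Lemma far_dist_le t u : far_set t -> t <= u -> u <= tau -> d (f t) (f u) <= C.
Proof.
move=> [[/andP[st _] Kd]|->] tu ut; last first.
  by rewrite (@le_anti _ _ u tau) ?tu ?ut // d_xx.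
have := Delta_le_C (lexx _) st tu ut.
rewrite /Delta ge_min => /orP[dC|//].
by have := lt_trans (lt_le_trans Kd dC) C_lt_K; rewrite ltxx.
Qed.

Lemma sigma_lt_theta : sigma < theta.
Proof.
have K_gt0 : 0 < K := le_lt_trans C_ge0 C_lt_K.
have sigma01 : 0 <= sigma < 1.
  by rewrite sigma_ge0 (lt_le_trans sigma_lt_tau tau_le1).
have [dl dl_gt0 near_sigma] := f_right_cont sigma01 K_gt0.
apply: (@lt_le_trans _ _ (Num.min (sigma + dl) tau)).
  by rewrite lt_min sigma_lt_tau ltrDl dl_gt0.
apply: lb_le_inf; first by exists tau; right.
move=> t [[/andP[st tt] Kd]|->]; last by rewrite ge_min lexx orbT.
rewrite ge_min; case: (ltP t (sigma + dl)) => tdl //.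
have t01 : sigma <= t <= 1 by rewrite st (le_trans tt tau_le1).
have := near_sigma t t01 tdl.
by rewrite d_sym => /(lt_trans Kd); rewrite ltxx.
Qed.

Lemma dist_before_theta s : sigma <= s -> s < theta -> d (f sigma) (f s) <= K.
Proof.
move=> ss sth; rewrite leNgt; apply/negP => Kd.
have s_le_tau : s <= tau.
  exact: ltW (lt_le_trans sth (theta_le_far (or_intror erefl))).
have far_s : far_set s by left; rewrite ss s_le_tau.
by have := theta_le_far far_s; rewrite leNgt sth.
Qed.

Lemma far_point_near u : theta <= u -> u <= tau ->
  exists2 t, far_set t & d (f t) (f u) <= K.
Proof.
move=> thu ut; have K_gt0 : 0 < K := le_lt_trans C_ge0 C_lt_K.
case: (ltP theta u) => [th_lt_u|u_le_th].
  have u_th_gt0 : 0 < u - theta by rewrite subr_gt0.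
  have [t far_t t_lt] := inf_adherent u_th_gt0 has_inf_far_set.
  exists t => //; apply: le_trans (ltW C_lt_K).
  by apply: far_dist_le => //; rewrite /theta in t_lt; lra.
have eq_th_u : theta = u by apply/le_anti; rewrite thu u_le_th.
rewrite -eq_th_u; case: (pselect (far_set theta)) => [far_th|not_far_th].
  by exists theta => //; rewrite d_xx ltW.
have th_lt_tau : theta < tau.
  rewrite lt_neqAle (le_trans thu ut) andbT.
  by apply/eqP => eq_th_tau; apply: not_far_th; right.
have theta01 : 0 <= theta < 1.
  rewrite (le_trans sigma_ge0 (ltW sigma_lt_theta)).
  exact: lt_le_trans th_lt_tau tau_le1.
have [dl dl_gt0 near_theta] := f_right_cont theta01 K_gt0.
have [t far_t t_lt] := inf_adherent dl_gt0 has_inf_far_set.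
have /andP[_ t_le_tau] := far_set_bounds far_t.
exists t => //; apply/ltW/near_theta => //.
by rewrite theta_le_far // (le_trans t_le_tau tau_le1).
Qed.

Lemma dist_after_theta u : theta <= u -> u <= tau -> d (f u) (f tau) <= K + C.
Proof.
move=> thu ut; have [t far_t dtu] := far_point_near thu ut.
have /andP[_ t_le_tau] := far_set_bounds far_t.
have dt_tau := far_dist_le far_t t_le_tau (lexx tau).
have := d_triangle (f u) (f t) (f tau).
by rewrite d_sym in dtu; lra.
Qed.

Lemma Nint_le_add : (Nint d f sigma tau <= (K + C)%:E)%E.
Proof.
apply: le_trans.
  apply: ereal_inf_lbound; exists theta.
  by split; [exact: sigma_lt_theta | apply: theta_le_far; right |].
apply: ge_ereal_sup => _ [s [u [ss sth thu ut ->]]].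
rewrite lee_fin ge_max dist_after_theta // andbT.
by rewrite (le_trans (dist_before_theta ss sth)) // lerDl.
Qed.

End NintBound.

Lemma Nint_le_twice sigma tau C : 0 <= sigma -> sigma < tau -> tau <= 1 ->
  0 <= C ->
  (forall s t u, sigma <= s -> s <= t -> t <= u -> u <= tau ->
     Delta d f s t u <= C) ->
  (Nint d f sigma tau <= (2 * C)%:E)%E.
Proof.
move=> sigma_ge0 st tau_le1 C_ge0 Delta_le_C; apply/lee_addgt0Pr => eps eps_gt0.
rewrite -EFinD (_ : 2 * C + eps = (C + eps) + C); last by lra.
by apply: Nint_le_add => //; lra.
Qed.

Variable mu : R.
Hypothesis mu_gt0 : 0 < mu.

Lemma holder_semi_ge0 : (0 <= holder_semi d mu f)%E.
Proof.
apply: le_ereal_sup_tmp; exists (Delta d f 0 0 0 / `|0 - 0 : R| `^ mu)%:E.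
  by exists 0, 0, 0; split => //; exact: ler01.
by rewrite lee_fin divr_ge0 ?powR_ge0 // /Delta le_min !d_ge0.
Qed.

Lemma holder_tilde_ge0 : (0 <= holder_tilde d mu f)%E.
Proof.
apply: le_ereal_sup_tmp; exists (Neta d f 1 * ((1 `^ mu)^-1)%:E)%E.
  by exists 1; split => //; exact: ltr01.
rewrite powR1 invr1 mule1; apply: le_ereal_sup_tmp; exists (Nint d f 0 1).
  by exists 0, 1; split => //; rewrite ?subr0 ?ltr01.
exact: Nint_ge0.
Qed.

Lemma holder_semi_le_tilde : (holder_semi d mu f <= holder_tilde d mu f)%E.
Proof.
apply: ge_ereal_sup => _ [s [t [u [s_ge0 st tu u_le1 ->]]]].
case: (eqVneq s u) => [<-|ne_su].
  by rewrite subrr normr0 powR0 ?gt_eqF // invr0 mulr0 holder_tilde_ge0.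
have su_gt0 : 0 < u - s by rewrite subr_gt0 lt_neqAle ne_su (le_trans st tu).
apply: le_ereal_sup_tmp.
exists (Neta d f (u - s) * (((u - s) `^ mu)^-1)%:E)%E; first by exists (u - s).
rewrite gtr0_norm // EFinM; apply: lee_wpmul2r.
  by rewrite lee_fin invr_ge0 powR_ge0.
apply: le_ereal_sup_tmp; exists (Nint d f s u); last exact: Delta_le_Nint.
by exists s, u; split => //; rewrite subr_gt0 in su_gt0.
Qed.

Lemma Delta_le_holder_semi c s t u : (holder_semi d mu f <= c%:E)%E ->
  0 <= s -> s <= t -> t <= u -> u <= 1 -> Delta d f s t u <= c * (u - s) `^ mu.
Proof.
move=> semi_le_c s_ge0 st tu u_le1; case: (eqVneq s u) => [eq_su|ne_su].
  subst u; have -> : t = s by apply/le_anti; rewrite tu st.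
  by rewrite subrr powR0 ?gt_eqF // mulr0 /Delta d_xx minxx.
have su_gt0 : 0 < u - s by rewrite subr_gt0 lt_neqAle ne_su (le_trans st tu).
have : ((Delta d f s t u / `|u - s| `^ mu)%:E <= c%:E)%E.
  by apply: le_trans semi_le_c; apply: ereal_sup_ubound; exists s, t, u.
by rewrite lee_fin gtr0_norm // ler_pdivrMr // powR_gt0.
Qed.

Lemma Neta_le_holder_semi c eta : (holder_semi d mu f <= c%:E)%E -> 0 < eta ->
  (Neta d f eta <= (2 * (c * eta `^ mu))%:E)%E.
Proof.
move=> semi_le_c eta_gt0.
have c_ge0 : 0 <= c by rewrite -lee_fin (le_trans holder_semi_ge0 semi_le_c).
apply: ge_ereal_sup => _ [sigma [tau [sigma_ge0 st tau_le1 ts_le_eta ->]]].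
apply: Nint_le_twice => //; first by rewrite mulr_ge0 ?powR_ge0.
move=> s t u ss stt tu ut.
apply: le_trans (Delta_le_holder_semi semi_le_c _ stt tu _) _.
- exact: le_trans sigma_ge0 ss.
- exact: le_trans ut tau_le1.
apply: ler_wpM2l => //.
apply: ge0_ler_powR; rewrite ?nnegrE ?(ltW mu_gt0) ?(ltW eta_gt0) //.
  by rewrite subr_ge0 (le_trans stt tu).
by lra.
Qed.

Lemma holder_tilde_le_holder_semi c : (holder_semi d mu f <= c%:E)%E ->
  (holder_tilde d mu f <= (2 * c)%:E)%E.
Proof.
move=> semi_le_c; apply: ge_ereal_sup => _ [eta [eta_gt0 ->]].
have pow_gt0 : 0 < eta `^ mu by apply: powR_gt0.
have -> : (2 * c)%:E = ((2 * (c * eta `^ mu))%:E * ((eta `^ mu)^-1)%:E)%E.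
  by rewrite -EFinM mulrA mulfK // gt_eqF.
apply: lee_wpmul2r; first by rewrite lee_fin invr_ge0 ltW.
exact: Neta_le_holder_semi.
Qed.

Lemma holder_tilde_le_twice_semi :
  (holder_tilde d mu f <= 2%:E * holder_semi d mu f)%E.
Proof.
case semi_eq: (holder_semi d mu f) => [c| |].
- by rewrite -EFinM; apply: holder_tilde_le_holder_semi; rewrite semi_eq.
- by rewrite mulry gtr0_sg // mul1e leey.
- by have := holder_semi_ge0; rewrite semi_eq.
Qed.

End Oscillation.

Theorem lemma1 (R : realType) (E : Type) (d : E -> E -> R)
  (HE : is_polish d) (mu : R) (Hmu : 0 < mu < 1) (f : R -> E)
  (Hf : in_Dmu d mu f) :
  ((2^-1)%:E * holder_tilde d mu f <= holder_semi d mu f)%E /\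
  (holder_semi d mu f <= 2%:E * holder_tilde d mu f)%E.
Proof.
case: HE => [[d_ge0 d_eq0 d_sym d_triangle] _ _].
have d_xx x : d x x = 0 by apply/d_eq0.
case: Hf => [[f_right_cont _] _].
have mu_gt0 : 0 < mu by case/andP: Hmu.
split.
  by rewrite lee_pdivrMl //; apply: holder_tilde_le_twice_semi.
apply: (@le_trans _ _ (holder_tilde d mu f)); first exact: holder_semi_le_tilde.
by apply: lee_pemull; [exact: holder_tilde_ge0 | rewrite lee_fin ler1n].
Qed.
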